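(* Let $\mathcal G_x$ be a matching graph with arrival distribution $(\alpha_i)$ such that a Braess paradox occurs when the edge $\{u,v\}$ ($u,v$ distinct non-adjacent nodes) is added, i.e. $\mathbb E[Q_x]<\mathbb E[\overline{Q_x}]$, where $\overline{\mathcal G_x}$ is $\mathcal G_x$ plus the edge $\{u,v\}$ and both FCFS models are stable. Let $x$ be a node distinct from $u$ and $v$, and let $\mathcal G_{yz}$ with arrival distribution $(\beta_i)$ be obtained by decomposing $x$ into $y$ and $z$, with $\beta_y,\beta_z>0$ (not necessarily equal), $\beta_y+\beta_z=\alpha_x$, and $\beta_i=\alpha_i$ for $i\ne x$. Let $\overline{\mathcal G_{yz}}$ be $\mathcal G_{yz}$ plus the edge $\{u,v\}$. Then $\mathbb E[Q_{yz}]<\mathbb E[\overline{Q_{yz}}]$, i.e. the Braess paradox also occurs for $(\mathcal G_{yz},\beta)$.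
   Context: A matching model consists of a finite connected simple graph and an arrival distribution on its nodes with positive entries. Under FCFS, the state is the word of unmatched item classes in order of arrival; an arriving item of class $i$ deletes the oldest letter of the word that is a neighbour of $i$, and if there is none $i$ is appended. For a stable model, $\mathbb E[Q]$ is the stationary mean number of items (word length). Decomposition: given a graph $\mathcal G_x=(\mathcal V,\xi)$ with node $x$, $\mathcal G_{yz}$ has node set $(\mathcal V\setminus\{x\})\cup\{y,z\}$ with $y,z$ new nodes; edges among $\mathcal V\setminus\{x\}$ are as in $\mathcal G_x$ and each of $y$ and $z$ is adjacent exactly to the neighbours of $x$ in $\mathcal G_x$ (so $y,z$ are not adjacent). $\mathbb E[Q_x],\mathbb E[\overline{Q_x}],\mathbb E[Q_{yz}],\mathbb E[\overline{Q_{yz}}]$ denote the stationary mean numbers of items for $(\mathcal G_x,\alpha)$, $(\overline{\mathcal G_x},\alpha)$, $(\mathcal G_{yz},\beta)$, $(\overline{\mathcal G_{yz}},\beta)$ respectively. *)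

From HB Require Import structures.
From mathcomp Require Import all_boot all_order all_algebra.
From mathcomp Require Import all_classical all_reals all_analysis.
Set Implicit Arguments. Unset Strict Implicit. Unset Printing Implicit Defensive.
Import Order.TTheory GRing.Theory Num.Theory numFieldNormedType.Exports.
Local Open Scope ring_scope.
Local Open Scope classical_set_scope.

Section FCFS.
Variables (R : realType) (T : finType).

Definition has_sum (a : nat -> R) (l : R) : Prop :=
  series a @ \oo --> l.

(* FCFS update of the word w when an item of class i arrives under the
   compatibility graph e: delete the oldest letter adjacent to i, or append i. *)
Definition fcfs_step (e : rel T) (w : seq T) (i : T) : seq T :=
  let k := find (e i) w in
  if (k < size w)%N then take k w ++ drop k.+1 w else rcons w i.

Definition fcfs_P (e : rel T) (alpha : T -> R) (w w' : seq T) : R :=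
  \sum_(i : T | fcfs_step e w i == w') alpha i.

(* pi is a stationary probability distribution on words (seq T), where the
   countable sum over words is organised by word length n (n.-tuple T). *)
Definition fcfs_stationary (e : rel T) (alpha : T -> R) (pi : seq T -> R) : Prop :=
  [/\ forall w, 0 <= pi w,
      has_sum (fun n => \sum_(t : n.-tuple T) pi t) 1
    & forall w', has_sum (fun n => \sum_(t : n.-tuple T) pi t * fcfs_P e alpha t w') (pi w')].

(* the model (e, alpha) is stable and its stationary mean number of items is m *)
Definition mean_queue (e : rel T) (alpha : T -> R) (m : R) : Prop :=
  exists pi, fcfs_stationary e alpha pi /\
    has_sum (fun n => n%:R * \sum_(t : n.-tuple T) pi t) m.

Definition add_edge (e : rel T) (u v : T) : rel T :=
  fun a b => [|| e a b, (a == u) && (b == v) | (a == v) && (b == u)].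

End FCFS.

Section Decomp.
Variables (R : realType) (T : finType).
(* decomposition of node x into y := Some x and z := None, on option T *)
Definition decomp (e : rel T) (x : T) : rel (option T) :=
  fun a b => match a, b with
  | Some a, Some b => e a b
  | None, Some b => e x b
  | Some a, None => e a x
  | None, None => false
  end.

Definition decomp_dist (alpha : T -> R) (x : T) (by_ bz : R) : option T -> R :=
  fun a => match a with
  | None => bz
  | Some a => if a == x then by_ else alpha a
  end.
End Decomp.

From HB Require Import structures.
From mathcomp Require Import all_boot all_order all_algebra.
From mathcomp Require Import all_classical all_reals all_analysis.
From mathcomp Require Import ring.
Import Order.TTheory GRing.Theory Num.Theory.
Local Open Scope ring_scope.

(* Decomposing a node preserves the mean queue length, hence the paradox.

   Write proj : option T -> T for the map sending y = Some x and z = None to x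
   and fixing the other nodes.  Since x is not adjacent to itself, the
   decomposed graph is the pull-back of e along proj, so the FCFS dynamics of
   the decomposed model, observed through proj, is the FCFS dynamics of the
   original one.  Each letter of class x is a y (resp. z) with conditional
   probability beta_y/alpha_x (resp. beta_z/alpha_x); W(w) is the product of
   these conditional weights over the letters of w.  If pi is stationary for
   (e, alpha), then pi'(w) = pi(proj w) W(w) is stationary for the decomposed
   model and has the same word-length distribution, hence the same mean.
   The heart of the proof is the intertwining identity
       sum_{t lift of t'} W(t) P'(t, w) = W(w) P(t', proj w),
   proved one arrival class at a time by induction on the word t'.
   Adding the edge {u,v} commutes with the decomposition of x (x is neither u
   nor v), so both means are unchanged and the strict inequality transfers. *)

Lemma fcfs_step_nil (T : finType) (e : rel T) (i : T) : fcfs_step e [::] i = [:: i].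
Proof. by []. Qed.

Lemma fcfs_step_cons (T : finType) (e : rel T) (c : T) (t : seq T) (i : T) :
  fcfs_step e (c :: t) i = if e i c then t else c :: fcfs_step e t i.
Proof.
rewrite /fcfs_step /=; case: (e i c) => /=; first by rewrite drop0.
by rewrite ltnS; case: ifP.
Qed.

Lemma big_option (V : nmodType) (T : finType) (F : option T -> V) :
  \sum_(c : option T) F c = F None + \sum_(a : T) F (Some a).
Proof.
rewrite (bigD1 None) //=; congr (_ + _).
rewrite (reindex_omap Some (fun c => c)) /=; last by case.
by apply: eq_bigl => a /=; rewrite eqxx.
Qed.

Lemma sum_tuple0 (V : nmodType) (A : finType) (F : 0.-tuple A -> V) :
  \sum_(t : 0.-tuple A) F t = F [tuple].
Proof. by rewrite (big_pred1 [tuple]) // => t /=; apply/esym/eqP; exact: tuple0. Qed.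

Lemma sum_tuple_cons (V : nmodType) (A : finType) (n : nat) (F : n.+1.-tuple A -> V) :
  \sum_(t : n.+1.-tuple A) F t = \sum_(a : A) \sum_(t : n.-tuple A) F (cons_tuple a t).
Proof.
rewrite pair_big /= (reindex (fun p : A * n.-tuple A => cons_tuple p.1 p.2)) //.
exists (fun t => (thead t, behead_tuple t)).
  by move=> [a t] _ /=; congr pair; apply: val_inj.
by move=> t _; case: t / tupleP => a t; apply: val_inj.
Qed.

Lemma has_sum_scale (R : realType) (a : nat -> R) (l k : R) :
  has_sum a l -> has_sum (fun n => k * a n) (k * l).
Proof.
rewrite /has_sum => a_l.
have -> : series (fun n => k * a n) = (fun n => k * series a n).
  by apply: funext => n; rewrite /series /= big_distrr.
exact: cvgMl_tmp.
Qed.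

Section Lift.
Variables (R : realType) (T : finType) (e : rel T) (x : T) (alpha : T -> R).
Variables (by_ bz : R).
Hypothesis exx : e x x = false.
Hypothesis alpha_x_gt0 : 0 < alpha x.
Hypothesis by_ge0 : 0 <= by_.
Hypothesis bz_ge0 : 0 <= bz.
Hypothesis beta_split : by_ + bz = alpha x.

Local Notation beta := (decomp_dist alpha x by_ bz).

Definition proj (c : option T) : T := if c is Some a then a else x.

(* conditional probability of the class c given its projection proj c *)
Definition letter_weight (c : option T) : R :=
  match c with
  | None => bz / alpha x
  | Some a => if a == x then by_ / alpha x else 1
  end.

Definition word_weight (s : seq (option T)) : R := \prod_(c <- s) letter_weight c.

Local Notation W := word_weight.

Lemma decomp_proj (a b : option T) : decomp e x a b = e (proj a) (proj b).
Proof. by case: a => [a|]; case: b => [b|] //=; rewrite exx. Qed.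

Lemma letter_weight_ge0 (c : option T) : 0 <= letter_weight c.
Proof.
have ge0 r : 0 <= r -> 0 <= r / alpha x by move=> r0; exact: divr_ge0 (ltW _).
by case: c => [a|] /=; [case: ifP|]; rewrite ?ge0.
Qed.

Lemma word_weight_ge0 (s : seq (option T)) : 0 <= W s.
Proof. by apply: prodr_ge0 => c _; exact: letter_weight_ge0. Qed.

Lemma word_weight_nil : W [::] = 1.
Proof. exact: big_nil. Qed.

Lemma word_weight_cons (c : option T) (s : seq (option T)) :
  W (c :: s) = letter_weight c * W s.
Proof. exact: big_cons. Qed.

Lemma fibre_letter_weight (a : T) : \sum_(c | proj c == a) letter_weight c = 1.
Proof.
have alpha_x_neq0 : alpha x != 0 by rewrite gt_eqF.
rewrite big_mkcond big_option /=.
have only_a (k : R) : \sum_(b : T) (if b == a then (if b == x then k else 1) else 0)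
                       = if a == x then k else 1.
  by rewrite -big_mkcond /= big_pred1_eq.
rewrite only_a; case: (eqVneq x a) => [_|_]; last by rewrite add0r.
by rewrite -mulrDl addrC beta_split divff.
Qed.

Lemma beta_letter_weight (c : option T) : beta c = letter_weight c * alpha (proj c).
Proof.
have alpha_x_unit : alpha x \is a GRing.unit by rewrite unitfE gt_eqF.
case: c => [a|] /=; last by rewrite mulrVK.
by case: (eqVneq a x) => [->|]; rewrite ?mulrVK ?mul1r.
Qed.

Lemma fibre_beta (a : T) (k : R) : \sum_(c | proj c == a) beta c * k = alpha a * k.
Proof.
rewrite (eq_bigr (fun c => letter_weight c * (alpha a * k))) => [|c /eqP <-].
  by rewrite -big_distrl /= fibre_letter_weight mul1r.
by rewrite beta_letter_weight mulrA.
Qed.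

Lemma fibre_pick (a : T) (d : option T) (f : option T -> R) :
  \sum_(c | proj c == a) (c == d)%:R * f c = (proj d == a)%:R * f d.
Proof.
rewrite big_mkcond (bigD1 d) //= eqxx big1 => [|c /negPf ->]; last by rewrite mul0r; case: ifP.
by rewrite addr0; case: ifP => _; rewrite ?mul1r ?mul0r.
Qed.

Fixpoint lift_sum (t' : seq T) (K : seq (option T) -> R) : R :=
  match t' with
  | [::] => K [::]
  | a :: t'' => \sum_(c | proj c == a) lift_sum t'' (fun t => K (c :: t))
  end.

Lemma sum_lift (n : nat) (H : seq T -> R) (K : seq (option T) -> R) :
  \sum_(t : n.-tuple (option T)) H (map proj t) * K t =
  \sum_(t' : n.-tuple T) H t' * lift_sum t' K.
Proof.
elim: n H K => [|n IH] H K; first by rewrite !sum_tuple0.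
rewrite !sum_tuple_cons (partition_big proj xpredT) //=; apply: eq_bigr => a _.
under [RHS]eq_bigr do rewrite big_distrr.
rewrite [RHS]exchange_big /=; apply: eq_bigr => c /eqP <-.
exact: (IH (fun s => H (proj c :: s)) (fun s => K (c :: s))).
Qed.

Lemma lift_sum_ext (t' : seq T) {K1 K2 : seq (option T) -> R} :
  K1 =1 K2 -> lift_sum t' K1 = lift_sum t' K2.
Proof. by elim: t' K1 K2 => [|a t' IH] K1 K2 eqK //=; apply: eq_bigr => c _; exact: IH. Qed.

Lemma lift_sum_sum (I : finType) (t' : seq T) (F : I -> seq (option T) -> R) :
  lift_sum t' (fun t => \sum_(i : I) F i t) = \sum_(i : I) lift_sum t' (F i).
Proof.
elim: t' F => [|a t' IH] F //=; rewrite exchange_big /=; apply: eq_bigr => c _.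
exact: (IH (fun i t => F i (c :: t))).
Qed.

Lemma lift_sum_scale (t' : seq T) (k : R) (K : seq (option T) -> R) :
  lift_sum t' (fun t => k * K t) = k * lift_sum t' K.
Proof.
elim: t' K => [|a t' IH] K //=; rewrite big_distrr /=; apply: eq_bigr => c _.
exact: (IH (fun t => K (c :: t))).
Qed.

Lemma lift_sum0 (t' : seq T) : lift_sum t' (fun=> 0) = 0.
Proof.
rewrite -[RHS](mul0r (lift_sum t' (fun=> 0))) -lift_sum_scale.
by apply: lift_sum_ext => t; rewrite mul0r.
Qed.

Lemma lift_sum_weight (t' : seq T) : lift_sum t' W = 1.
Proof.
elim: t' => [|a t' IH] /=; first exact: word_weight_nil.
rewrite -(fibre_letter_weight a); apply: eq_bigr => c _.
by rewrite (lift_sum_ext _ (word_weight_cons c)) lift_sum_scale IH mulr1.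
Qed.

Lemma lift_sum_weight_eq (t' : seq T) (w : seq (option T)) :
  lift_sum t' (fun t => W t * (t == w)%:R) = W w * (map proj w == t')%:R.
Proof.
elim: t' w => [|a t' IH] [|d w] /=; rewrite ?word_weight_nil ?mulr0 ?mul1r //.
  by rewrite big1 // => c _; rewrite (lift_sum_ext _ (fun t => mulr0 _)) lift_sum0.
under eq_bigr => c _.
  rewrite (@lift_sum_ext _ _ (fun t => ((c == d)%:R * letter_weight c) * (W t * (t == w)%:R))).
    by rewrite lift_sum_scale IH -mulrA; over.
  by move=> t; rewrite word_weight_cons eqseq_cons -mulnb natrM; ring.
by rewrite fibre_pick word_weight_cons eqseq_cons -mulnb natrM; ring.
Qed.

Definition lifted_step (t' : seq T) (c : option T) (w : seq (option T)) : R :=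
  lift_sum t' (fun t => W t * (fcfs_step (decomp e x) t c == w)%:R).

Lemma lifted_step_nil (c : option T) (w : seq (option T)) :
  lifted_step [::] c w = (w == [:: c])%:R.
Proof. by rewrite /lifted_step /= word_weight_nil mul1r eq_sym. Qed.

Lemma lifted_step_match (b : T) (t' : seq T) (c : option T) (w : seq (option T)) :
  e (proj c) b -> lifted_step (b :: t') c w = W w * (map proj w == t')%:R.
Proof.
move=> ecb; rewrite /lifted_step /=.
under eq_bigr => d /eqP proj_d.
  rewrite (@lift_sum_ext _ _ (fun t => letter_weight d * (W t * (t == w)%:R))).
    by rewrite lift_sum_scale lift_sum_weight_eq; over.
  by move=> t; rewrite fcfs_step_cons decomp_proj proj_d ecb word_weight_cons mulrA.
by rewrite -big_distrl /= fibre_letter_weight mul1r.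
Qed.

Lemma lifted_step_skip (b : T) (t' : seq T) (c : option T) (w : seq (option T)) :
  ~~ e (proj c) b ->
  lifted_step (b :: t') c w =
    if w is d :: w' then letter_weight d * (proj d == b)%:R * lifted_step t' c w'
    else 0.
Proof.
move=> /negPf ecb; rewrite /lifted_step /=.
have skip d t : proj d = b ->
    fcfs_step (decomp e x) (d :: t) c = d :: fcfs_step (decomp e x) t c.
  by move=> proj_d; rewrite fcfs_step_cons decomp_proj proj_d ecb.
case: w => [|d' w].
  rewrite big1 // => d /eqP proj_d; rewrite -(lift_sum0 t').
  by apply: lift_sum_ext => t; rewrite skip // mulr0.
under eq_bigr => d /eqP proj_d.
  rewrite (@lift_sum_ext _ _ (fun t => ((d == d')%:R * letter_weight d) *
              (W t * (fcfs_step (decomp e x) t c == w)%:R))).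
    by rewrite lift_sum_scale -mulrA; over.
  by move=> t; rewrite skip // word_weight_cons eqseq_cons -mulnb natrM; ring.
by rewrite fibre_pick; ring.
Qed.

Lemma fibre_lifted_step (a : T) (t' : seq T) (w : seq (option T)) :
  \sum_(c | proj c == a) beta c * lifted_step t' c w =
    alpha a * W w * (fcfs_step e t' a == map proj w)%:R.
Proof.
elim: t' w => [|b t' IH] w.
  under eq_bigr do rewrite lifted_step_nil.
  case: w => [|d [|d' w]] /=; rewrite ?fcfs_step_nil.
  - by rewrite big1 ?mulr0 // => c _; rewrite mulr0.
  - rewrite (eq_bigr (fun c => (c == d)%:R * beta c)) => [|c _]; last first.
      by rewrite eqseq_cons /= andbT eq_sym mulrC.
    rewrite fibre_pick beta_letter_weight word_weight_cons word_weight_nil.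
    rewrite eqseq_cons /= andbT (eq_sym a); case: eqP => [<-|_] /=; ring.
  - rewrite eqseq_cons /= andbF mulr0 big1 // => c _.
    by rewrite eqseq_cons /= andbF mulr0.
rewrite fcfs_step_cons; have [eab|neab] := boolP (e a b).
  rewrite (eq_bigr (fun c => beta c * (W w * (map proj w == t')%:R))) => [|c /eqP proj_c].
    by rewrite fibre_beta eq_sym; ring.
  by rewrite lifted_step_match // proj_c.
rewrite (eq_bigr (fun c => beta c * if w is d :: w' then
      letter_weight d * (proj d == b)%:R * lifted_step t' c w' else 0)) => [|c /eqP proj_c];
  last by rewrite lifted_step_skip // proj_c.
case: w => [|d w]; first by rewrite big1 ?mulr0 // => c _; rewrite mulr0.
under eq_bigr do rewrite mulrCA.
rewrite -big_distrr /= IH word_weight_cons /= eqseq_cons -mulnb natrM eq_sym; ring.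
Qed.

Lemma lift_sum_kernel (t' : seq T) (w : seq (option T)) :
  lift_sum t' (fun t => W t * fcfs_P (decomp e x) beta t w) =
    W w * fcfs_P e alpha t' (map proj w).
Proof.
rewrite (@lift_sum_ext _ _
    (fun t => \sum_c beta c * (W t * (fcfs_step (decomp e x) t c == w)%:R))); last first.
  move=> t; rewrite /fcfs_P big_distrr big_mkcond /=; apply: eq_bigr => c _.
  by case: (_ == w) => /=; ring.
rewrite lift_sum_sum; under eq_bigr do rewrite lift_sum_scale.
rewrite (partition_big proj xpredT) //= /fcfs_P big_distrr [RHS]big_mkcond /=.
apply: eq_bigr => a _; rewrite fibre_lifted_step.
by case: (_ == _) => /=; ring.
Qed.

Lemma decomp_mean_queue (m : R) :
  mean_queue e alpha m -> mean_queue (decomp e x) beta m.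
Proof.
case=> pi [[pi_ge0 pi_sum pi_stat] pi_mean].
have lift_mass n : \sum_(t : n.-tuple (option T)) pi (map proj t) * W t =
                   \sum_(t : n.-tuple T) pi t.
  by rewrite sum_lift; apply: eq_bigr => t _; rewrite lift_sum_weight mulr1.
exists (fun t => pi (map proj t) * W t); split; [split|].
- by move=> w; apply: mulr_ge0 => //; exact: word_weight_ge0.
- by under eq_fun do rewrite lift_mass.
- move=> w; rewrite [pi _ * W w]mulrC.
  under eq_fun => n.
    under eq_bigr do rewrite -mulrA.
    rewrite (sum_lift n pi (fun t => W t * fcfs_P (decomp e x) beta t w)).
    under eq_bigr do rewrite lift_sum_kernel mulrCA.
    rewrite -big_distrr /=.
  over.
  exact: has_sum_scale (pi_stat (map proj w)).
- by under eq_fun do rewrite lift_mass.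
Qed.

End Lift.

Lemma add_edge_decomp (T : finType) (e : rel T) (u v x : T) :
  x != u -> x != v ->
  add_edge (decomp e x) (Some u) (Some v) = decomp (add_edge e u v) x.
Proof.
move=> xu xv; apply: funext => a; apply: funext => b.
by case: a => [a|]; case: b => [b|]; rewrite /add_edge /= ?(negPf xu) ?(negPf xv) ?orbF.
Qed.

Theorem mainTheorem13 (R : realType) (T : finType) (e : rel T) (alpha : T -> R)
    (u v x : T) (by_ bz mQ mQbar : R) :
  symmetric e -> irreflexive e -> (forall a b, connect e a b) ->
  (forall i, 0 < alpha i) -> \sum_(i : T) alpha i = 1 ->
  u != v -> ~~ e u v -> x != u -> x != v ->
  mean_queue e alpha mQ ->
  mean_queue (add_edge e u v) alpha mQbar ->
  mQ < mQbar ->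
  0 < by_ -> 0 < bz -> by_ + bz = alpha x ->
  exists mQyz mQyzbar : R,
    [/\ mean_queue (decomp e x) (decomp_dist alpha x by_ bz) mQyz,
        mean_queue (add_edge (decomp e x) (Some u) (Some v))
                   (decomp_dist alpha x by_ bz) mQyzbar
      & mQyz < mQyzbar].
Proof.
move=> _ irr_e _ alpha_gt0 _ _ _ xu xv mean_Q mean_Qbar lt_Q by_gt0 bz_gt0 beta_split.
have exx : e x x = false by apply/negbTE; rewrite irr_e.
have exx_bar : add_edge e u v x x = false by rewrite /add_edge exx (negPf xu) (negPf xv).
exists mQ, mQbar; split => //.
- exact: decomp_mean_queue exx (alpha_gt0 x) (ltW by_gt0) (ltW bz_gt0) beta_split _ mean_Q.
- rewrite add_edge_decomp //.
  exact: decomp_mean_queue exx_bar (alpha_gt0 x) (ltW by_gt0) (ltW bz_gt0) beta_split _ mean_Qbar.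
Qed.
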